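(* Non-determinism of a KAT expression is witnessed by a finite interpretation: if $e\in\mathsf{KAT}(\Sigma,T)$ is not deterministic, then there exist a finite set $S$, $\tau:T\to2^S$ and $\sigma:\Sigma\to2^{S\times S}$ such that $\sigma(p)$ is the graph of a partial function for every $p\in\Sigma$ but $\mathcal{R}[\![e]\!]^\sigma_\tau$ is not the graph of a partial function.
   Context: For finite $T$ (tests), $\Sigma$ (actions): $\mathsf{BA}(T)$: $b::=\mathsf{false}\mid\mathsf{true}\mid t\in T\mid b\vee c\mid b\wedge c\mid\overline b$; $\mathsf{KAT}(\Sigma,T)$: $e::=b\mid p\in\Sigma\mid e+f\mid e\cdot f\mid e^*$. Relational semantics for a set $S$, $\tau:T\to2^S$, $\sigma:\Sigma\to2^{S\times S}$: tests denote subsets $[\![b]\!]_\tau$ (Boolean), $\mathcal{R}[\![b]\!]=\{\langle s,s\rangle:s\in[\![b]\!]_\tau\}$, $\mathcal{R}[\![p]\!]=\sigma(p)$, $\mathcal{R}[\![e+f]\!]=\mathcal{R}[\![e]\!]\cup\mathcal{R}[\![f]\!]$, $\mathcal{R}[\![ef]\!]=\mathcal{R}[\![e]\!]\circ\mathcal{R}[\![f]\!]$ (first $e$, then $f$), $\mathcal{R}[\![e^*]\!]$ is the reflexive-transitive closure of $\mathcal{R}[\![e]\!]$. $e$ is deterministic if for all (possibly infinite) $S$, $\tau$, $\sigma$ with each $\sigma(p)$ the graph of a partial function, $\mathcal{R}[\![e]\!]^\sigma_\tau$ is the graph of a partial function. *)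

From mathcomp Require Import all_boot.
From Stdlib Require Import Relations.Relation_Operators.
Set Implicit Arguments. Unset Strict Implicit. Unset Printing Implicit Defensive.

Inductive BA (T : finType) : Type :=
| BFalse | BTrue | BTest of T
| BOr of BA T & BA T | BAnd of BA T & BA T | BNot of BA T.

Inductive KAT (Sigma T : finType) : Type :=
| KTest of BA T
| KAct of Sigma
| KPlus of KAT Sigma T & KAT Sigma T
| KSeq of KAT Sigma T & KAT Sigma T
| KStar of KAT Sigma T.

Fixpoint BA_sem (T : finType) (S : Type) (tau : T -> S -> Prop) (b : BA T) : S -> Prop :=
  match b with
  | BFalse => fun _ => False
  | BTrue => fun _ => True
  | BTest t => tau t
  | BOr b c => fun s => BA_sem tau b s \/ BA_sem tau c s
  | BAnd b c => fun s => BA_sem tau b s /\ BA_sem tau c s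
  | BNot b => fun s => ~ BA_sem tau b s
  end.

Definition rcomp (S : Type) (r1 r2 : S -> S -> Prop) : S -> S -> Prop :=
  fun x z => exists y, r1 x y /\ r2 y z.

Fixpoint KAT_sem (Sigma T : finType) (S : Type) (tau : T -> S -> Prop)
  (sigma : Sigma -> S -> S -> Prop) (e : KAT Sigma T) : S -> S -> Prop :=
  match e with
  | KTest b => fun s s' => s = s' /\ BA_sem tau b s
  | KAct p => sigma p
  | KPlus e f => fun s s' => KAT_sem tau sigma e s s' \/ KAT_sem tau sigma f s s'
  | KSeq e f => rcomp (KAT_sem tau sigma e) (KAT_sem tau sigma f)
  | KStar e => clos_refl_trans S (KAT_sem tau sigma e)
  end.

Definition partial_fun (S : Type) (r : S -> S -> Prop) : Prop :=
  forall x y z, r x y -> r x z -> y = z.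

Definition deterministic (Sigma T : finType) (e : KAT Sigma T) : Prop :=
  forall (S : Type) (tau : T -> S -> Prop) (sigma : Sigma -> S -> S -> Prop),
    (forall p, partial_fun (sigma p)) -> partial_fun (KAT_sem tau sigma e).

From mathcomp Require Import all_boot.
From Stdlib Require Import Relations.Relation_Operators Classical List.
Set Implicit Arguments.
Unset Strict Implicit.

(* A pair related by the semantics of [e] is derived from finitely many
   intermediate states.  Pulling an interpretation back along an injection
   [f : S' -> S] keeps the actions partial functions, and keeps every such
   derivation whose states lie in the range of [f].  So if [x] is related to
   [y <> z] over an arbitrary [S], pulling back along an injection from a
   finite type whose range contains [x], [y], [z] and the states of both
   derivations gives a finite interpretation in which [e] is not functional. *)

Definition rel_pullback (S S' : Type) (f : S' -> S) (r : S -> S -> Prop) :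
  S' -> S' -> Prop := fun i j => r (f i) (f j).

Definition covers (S S' : Type) (f : S' -> S) (L : list S) : Prop :=
  Forall (fun s => exists i, f i = s) L.

Lemma partial_fun_pullback (S S' : Type) (f : S' -> S) (r : S -> S -> Prop) :
  injective f -> partial_fun r -> partial_fun (rel_pullback f r).
Proof. by move=> f_inj r_pf i j k rij rik; apply: f_inj; apply: r_pf rij rik. Qed.

Lemma finite_cover (S : Type) (L : list S) :
  exists (S' : finType) (f : S' -> S), injective f /\ covers f L.
Proof.
elim: L => [|s L [S' [f [f_inj cov]]]].
  by exists void, (fun v : void => match v with end); split=> [[]|].
(* [S] has no decidable equality: whether [s] is already covered is decided classically. *)
have [[i fi]|s_new] := classic (exists i, f i = s).
  by exists S', f; split=> //; constructor=> //; exists i.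
exists (option S'), (fun o => if o is Some i then f i else s); split.
  move=> [i|] [j|] //= fij; first by rewrite (f_inj _ _ fij).
    by case: s_new; exists i.
  by case: s_new; exists j.
constructor; first by exists None.
by apply: Forall_impl cov => t [i fi]; exists (Some i).
Qed.

Section Support.
Variable S : Type.

Definition supports (L : list S) (a b : S)
  (R : forall S' : Type, (S' -> S) -> S' -> S' -> Prop) : Prop :=
  forall (S' : Type) (f : S' -> S), injective f -> covers f L ->
  forall i j, f i = a -> f j = b -> R S' f i j.

Lemma supports_impl L a b (R R' : forall S' : Type, (S' -> S) -> S' -> S' -> Prop) :
  (forall S' f i j, R S' f i j -> R' S' f i j) ->
  supports L a b R -> supports L a b R'.
Proof. by move=> RR' supp S' f f_inj cov i j fi fj; apply/RR'/supp. Qed.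

Lemma supports_refl a (R : forall S' : Type, (S' -> S) -> S' -> S' -> Prop) :
  (forall S' f i, f i = a -> R S' f i i) -> supports nil a a R.
Proof. by move=> R_refl S' f f_inj _ i j fi; rewrite -fi => /f_inj ->; apply: R_refl. Qed.

Lemma supports_comp L1 L2 a c b (R1 R2 : forall S' : Type, (S' -> S) -> S' -> S' -> Prop) :
  supports L1 a c R1 -> supports L2 c b R2 ->
  supports (c :: L1 ++ L2) a b (fun S' f => rcomp (R1 S' f) (R2 S' f)).
Proof.
move=> supp1 supp2 S' f f_inj /Forall_cons_iff [[k fk] /Forall_app [cov1 cov2]] i j fi fj.
by exists k; split; [apply: supp1 | apply: supp2].
Qed.

Lemma clos_refl_trans_support (r : S -> S -> Prop)
  (R : forall S' : Type, (S' -> S) -> S' -> S' -> Prop) :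
  (forall a b, r a b -> exists L, supports L a b R) ->
  forall a b, clos_refl_trans _ r a b ->
  exists L, supports L a b (fun S' f => clos_refl_trans _ (R S' f)).
Proof.
move=> r_supp a b; elim=> [x y /r_supp [L supp] | x | x y z _ [L1 supp1] _ [L2 supp2]].
- by exists L; apply: supports_impl supp => *; apply: rt_step.
- by exists nil; apply: supports_refl => *; apply: rt_refl.
- exists (y :: L1 ++ L2); apply: supports_impl (supports_comp supp1 supp2).
  by move=> S' f i j [k [ik kj]]; apply: rt_trans ik kj.
Qed.

Variables (Sigma T : finType) (tau : T -> S -> Prop) (sigma : Sigma -> S -> S -> Prop).

Definition sem_along (e : KAT Sigma T) (S' : Type) (f : S' -> S) : S' -> S' -> Prop :=
  KAT_sem (fun t => tau t \o f) (fun p => rel_pullback f (sigma p)) e.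

Lemma BA_sem_pullback (S' : Type) (f : S' -> S) (b : BA T) i :
  BA_sem (fun t => tau t \o f) b i <-> BA_sem tau b (f i).
Proof. by elim: b => //= [b1 IH1 b2 IH2|b1 IH1 b2 IH2|b1 IH1]; tauto. Qed.

Lemma KAT_sem_finite_support (e : KAT Sigma T) a b :
  KAT_sem tau sigma e a b -> exists L, supports L a b (sem_along e).
Proof.
elim: e a b => [t|p|e1 IH1 e2 IH2|e1 IH1 e2 IH2|e1 IH1] a b /=.
- move=> [<- ta]; exists nil; apply: supports_refl => S' f i fi.
  by split=> //; apply/BA_sem_pullback; rewrite fi.
- by move=> sab; exists nil => S' f _ _ i j fi fj; rewrite /sem_along /= /rel_pullback fi fj.
- case=> [/IH1 | /IH2] [L supp]; exists L; apply: supports_impl supp => *; [left|right] => //.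
- move=> [c [/IH1 [L1 supp1] /IH2 [L2 supp2]]].
  by exists (c :: L1 ++ L2); apply: supports_comp supp1 supp2.
- exact: clos_refl_trans_support.
Qed.

End Support.

Theorem proposition4p5 (Sigma T : finType) (e : KAT Sigma T) :
  ~ deterministic e ->
  exists (S : finType) (tau : T -> S -> Prop) (sigma : Sigma -> S -> S -> Prop),
    (forall p, partial_fun (sigma p)) /\ ~ partial_fun (KAT_sem tau sigma e).
Proof.
move=> nondet; apply: NNPP => no_finite_witness.
apply: nondet => S tau sigma sigma_pf x y z xy xz; apply: NNPP => neq_yz.
have [L1 supp1] := KAT_sem_finite_support xy.
have [L2 supp2] := KAT_sem_finite_support xz.
have [S' [f [f_inj]]] := finite_cover (x :: y :: z :: L1 ++ L2).
move=> /Forall_cons_iff [[i fi] /Forall_cons_iff [[j fj]]].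
move=> /Forall_cons_iff [[k fk] /Forall_app [cov1 cov2]].
apply: no_finite_witness.
exists S', (fun t => tau t \o f), (fun p => rel_pullback f (sigma p)); split.
  by move=> p; apply: partial_fun_pullback.
move=> sem_pf; apply: neq_yz; rewrite -fj -fk; congr f.
by apply: (sem_pf i); [apply: supp1 | apply: supp2].
Qed.
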